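(* Let $\mu>0$, $\sigma>0$ with $\mu\ge\sqrt3\sigma$, and $\rho\in(0,1)$. Let $\omega$ be uniformly distributed on $\Omega=[\mu-\sqrt3\sigma,\mu+\sqrt3\sigma]$, let the real-time price be $p^{\omega,*}=\rho^{-1}\mathbf 1\{\omega\le\mu\}$ (faced by both participants), and let the electricity-market profits of the peaker plant $P$ (option seller) and wind producer $W$ (option buyer) be $$\pi_P^\omega=(\mu-\omega)^+(\rho^{-1}-1),\qquad \pi_W^\omega=\mu-(\mu-\omega)^+/\rho .$$ Let $\mathcal A_0=[0,1/\rho]\times[0,1/\rho]\times[0,\sqrt3\sigma]$, $\mathcal A_P=\{(q,K,\Delta)\in\mathcal A_0: K+2q\ge 1/\rho\}$ and $\mathcal A_W=\{(q,K,\Delta)\in\mathcal A_0:K+2q\le 1/\rho\}$. Consider the problem of minimizing $\mathrm{var}[\Pi_W^\omega]+\mathrm{var}[\Pi_P^\omega]$, where $$\Pi_W^\omega=\pi_W^\omega-q_W\Delta_W+(p^{\omega,*}-K_W)^+\Delta_W,\qquad \Pi_P^\omega=\pi_P^\omega+q_P\Delta_P-(p^{\omega,*}-K_P)^+\delta_P^\omega,$$ over $(q_W,K_W,\Delta_W)\in\mathcal A_W$, $(q_P,K_P,\Delta_P)\in\mathcal A_P$ and measurable $\delta_P:\Omega\to[0,\Delta_P]$, subject to $\Delta_P=\Delta_W$ and, almost surely, $\delta_P^\omega=\Delta_W\mathbf 1\{p^{\omega,*}\ge K_W\}$ and $$q_W\Delta_W-q_P\Delta_P-(p^{\omega,*}-K_W)^+\Delta_W+(p^{\omega,*}-K_P)^+\delta_P^\omega=0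 .$$ Then the optimal solutions are exactly those with $(q_W^*,K_W^*,\Delta_W^* )=(q_P^*,K_P^*,\Delta_P^* )=(q^*,K^*,\Delta^* )$ where $$\Delta^*\in\Big[\tfrac{\sqrt3\sigma(2-\rho)}{4},\ \sqrt3\sigma\Big],\qquad q^*=\frac{\sqrt3\sigma}{4\rho\Delta^*}-\frac{\sqrt3\sigma}{8\Delta^*},\qquad K^*=\frac1\rho\Big(\frac{2\Delta^*-\sqrt3\sigma}{2\Delta^*}\Big)+\frac{\sqrt3\sigma}{4\Delta^*}.$$ Moreover, $$\sum_{i\in\{W,P\}}\big(\mathrm{var}[\Pi_i^{\omega,*}]-\mathrm{var}[\pi_i^\omega]\big)=-\frac{3\sigma^2}{8}\Big(\rho^{-1}-\frac12\Big)^2<0 .$$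
   Context: $z^+:=\max\{z,0\}$; $\mathbf 1\{\cdot\}$ is an indicator. This is the centralized (market-maker) clearing of cash-settled call options (option price $q$, strike $K$, quantity $\Delta$, payoff $(p-K)^+$ per unit) between a wind producer and a peaker plant in a copperplate power system example (base-load generator with no ramping, peaker offering marginal cost $1/\rho$, zero-cost wind with available capacity $\omega$, demand $d\ge\mu+\sqrt3\sigma$), where both are risk-neutral; the acceptable sets $\mathcal A_P,\mathcal A_W$ are the risk-neutral acceptability sets in that example, and the last constraint says the market maker's merchandising surplus is zero in every scenario. *)

From HB Require Import structures.
From mathcomp Require Import all_boot all_order all_algebra.
From mathcomp Require Import all_classical all_reals all_analysis.
Set Implicit Arguments. Unset Strict Implicit. Unset Printing Implicit Defensive.
Import Order.TTheory GRing.Theory Num.Theory.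
Import numFieldNormedType.Exports.
Local Open Scope classical_set_scope.
Local Open Scope ring_scope.

Section Defs.
Variable R : realType.
Implicit Types (mu sigma rho : R) (x : R * R * R).

Definition pos (z : R) : R := Num.max z 0.

Definition s3 sigma : R := Num.sqrt 3 * sigma.

Definition Omega mu sigma : set R := `[mu - s3 sigma, mu + s3 sigma].

Definition price mu rho (w : R) : R := if w <= mu then rho^-1 else 0.

Definition profitP mu rho (w : R) : R := pos (mu - w) * (rho^-1 - 1).
Definition profitW mu rho (w : R) : R := mu - pos (mu - w) / rho.

Definition Exp mu sigma (f : R -> R) : R :=
  (2 * s3 sigma)^-1 * Rintegral (@lebesgue_measure R) (Omega mu sigma) f.
Definition Var mu sigma (f : R -> R) : R :=
  Exp mu sigma (fun w => (f w - Exp mu sigma f) ^+ 2).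

Definition qof x : R := x.1.1.
Definition Kof x : R := x.1.2.
Definition Dof x : R := x.2.

Definition A0 sigma rho x : Prop :=
  [/\ 0 <= qof x <= rho^-1, 0 <= Kof x <= rho^-1 & 0 <= Dof x <= s3 sigma].
Definition AP sigma rho x : Prop := A0 sigma rho x /\ rho^-1 <= Kof x + 2 * qof x.
Definition AW sigma rho x : Prop := A0 sigma rho x /\ Kof x + 2 * qof x <= rho^-1.

Definition PiW mu rho x (w : R) : R :=
  profitW mu rho w - qof x * Dof x + pos (price mu rho w - Kof x) * Dof x.
Definition PiP mu rho x (delta : R -> R) (w : R) : R :=
  profitP mu rho w + qof x * Dof x - pos (price mu rho w - Kof x) * delta w.

Definition Feasible mu sigma rho xW xP (delta : R -> R) : Prop :=
  [/\ AW sigma rho xW, AP sigma rho xP,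
      measurable_fun (Omega mu sigma) delta,
      (forall w, Omega mu sigma w -> 0 <= delta w <= Dof xP) &
      Dof xP = Dof xW] /\
  ({ae @lebesgue_measure R, forall w, Omega mu sigma w ->
         delta w = (if Kof xW <= price mu rho w then Dof xW else 0)} /\
   {ae @lebesgue_measure R, forall w, Omega mu sigma w ->
         qof xW * Dof xW - qof xP * Dof xP
         - pos (price mu rho w - Kof xW) * Dof xW
         + pos (price mu rho w - Kof xP) * delta w = 0}).

Definition Objective mu sigma rho xW xP (delta : R -> R) : R :=
  Var mu sigma (PiW mu rho xW) + Var mu sigma (PiP mu rho xP delta).

Definition Optimal mu sigma rho xW xP (delta : R -> R) : Prop :=
  Feasible mu sigma rho xW xP delta /\
  forall xW' xP' (delta' : R -> R), Feasible mu sigma rho xW' xP' delta' ->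
    Objective mu sigma rho xW xP delta <= Objective mu sigma rho xW' xP' delta'.

Definition qstar sigma rho (D : R) : R :=
  s3 sigma / (4 * rho * D) - s3 sigma / (8 * D).
Definition Kstar sigma rho (D : R) : R :=
  rho^-1 * ((2 * D - s3 sigma) / (2 * D)) + s3 sigma / (4 * D).
Definition xstar sigma rho (D : R) : R * R * R :=
  (qstar sigma rho D, Kstar sigma rho D, D).

End Defs.

From HB Require Import structures.
From mathcomp Require Import all_boot all_order all_algebra.
From mathcomp Require Import all_classical all_reals all_analysis.
From mathcomp Require Import ring lra measurable_realfun.
Import Order.TTheory GRing.Theory Num.Theory.
Import numFieldNormedType.Exports.
Local Open Scope classical_set_scope.
Local Open Scope ring_scope.

(* Almost surely on Omega, every profit in the problem is affine in the
   shortfall Y = (mu - w)^+ and the scarcity indicator X = 1{w <= mu}, and the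
   zero-surplus constraint makes the peaker pay exactly what the wind producer
   receives from the option, c = (1/rho - K) Delta, in the scarce scenarios.
   As X Y = Y, X^2 = X, E X = 1/2 and E Y = sqrt3 sigma / 4, the variance of
   u + v Y + c X is v^2 var Y + v c sqrt3 sigma / 4 + c^2 / 4, so the total
   change of variance is the quadratic c^2 / 2 - (2/rho - 1) c sqrt3 sigma / 4,
   minimal exactly at c* = (2/rho - 1) sqrt3 sigma / 4.  Evaluating the
   almost-sure constraints at a scarce and at a non-scarce scenario forces both
   sides to hold the same contract, and the acceptability constraints then
   leave exactly the contracts x*(Delta) with payout c*. *)

Lemma pos_ifE (R : realType) (z : R) : pos z = if 0 <= z then z else 0.
Proof.
by rewrite /pos; case: ifPn => z0; [rewrite max_l | rewrite max_r // ltW // ltNge].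
Qed.

Section lebesgue_measure_facts.
Context {R : realType}.

Lemma lebesgue_itv_gt0 (l r : bool) [a b : R] :
  a < b -> (0 < lebesgue_measure [set` Interval (BSide l a) (BSide r b)])%E.
Proof.
move=> ab; rewrite lebesgue_measure_itv /= lte_fin.
by case: l r => -[]; rewrite /= ?bnd_simp ab -EFinD lte_fin subr_gt0.
Qed.

(* Type class inference does not find the [Filter] instance of the Lebesgue
   almost-everywhere filter, so [filterS] and [filterI] get it explicitly. *)
Lemma ae_lebesgueS [P Q : R -> Prop] : (forall w, P w -> Q w) ->
  {ae @lebesgue_measure R, forall w, P w} -> {ae @lebesgue_measure R, forall w, Q w}.
Proof. exact: (@filterS _ _ (@ae_filter_ringOfSetsType _ (measurableTypeR R) R _)). Qed.

Lemma ae_lebesgueI [P Q : R -> Prop] :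
  {ae @lebesgue_measure R, forall w, P w} -> {ae @lebesgue_measure R, forall w, Q w} ->
  {ae @lebesgue_measure R, forall w, P w /\ Q w}.
Proof. exact: (@filterI _ _ (@ae_filter_ringOfSetsType _ (measurableTypeR R) R _)). Qed.

Lemma ae_witness [A : set R] [P : R -> Prop] :
  @measurable _ (measurableTypeR R) A -> (0 < lebesgue_measure A)%E ->
  {ae @lebesgue_measure R, forall w, P w} -> exists2 w, A w & P w.
Proof.
move=> mA A_gt0 [N [mN N0 PN]]; apply: contrapT => noAP.
suff A0 : lebesgue_measure A = 0 by move: A_gt0; rewrite A0 ltxx.
apply: (measure_negligible mA); exists N; split => // w Aw; apply: PN => Pw.
by apply: noAP; exists w.
Qed.

Lemma Rintegral_itv_subr (a m : R) : a < m ->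
  Rintegral lebesgue_measure `[a, m] (fun w => m - w) = (m - a) ^+ 2 / 2.
Proof.
move=> am; pose F : R -> R := m \*: id - 2^-1 \*: id ^+ 2.
have F' (x : R) : is_derive x (1 : R) F (m - x).
  by apply: is_derive_eq; rewrite expr1 scalerA /GRing.scale /=; field.
have FE x : F x = m * x - 2^-1 * x ^+ 2 by rewrite /F !fctE.
have cF : continuous F.
  by move=> x; apply/differentiable_continuous/derivable1_diffP; case: (F' x).
rewrite /Rintegral (@continuous_FTC2 _ _ F).
- by rewrite /= !FE; field.
- exact: am.
- apply: continuous_subspaceT => x.
  by apply: continuousB; [exact: cst_continuous | exact: cvg_id].
- split.
  + by move=> x _; case: (F' x).
  + exact: cvg_at_right_filter (cF a).
  + exact: cvg_at_left_filter (cF m).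
- by move=> x _; rewrite derive1E; apply: derive_val.
Qed.

End lebesgue_measure_facts.

Section uniform_expectation.
Context {R : realType} {mu sigma : R}.
Hypothesis sigma_gt0 : 0 < sigma.
Implicit Types f g : R -> R.

Lemma s3_gt0 : 0 < s3 sigma.
Proof. by rewrite mulr_gt0 // sqrtr_gt0 ltr0n. Qed.

Lemma measurable_Omega : @measurable _ (measurableTypeR R) (Omega mu sigma).
Proof. exact: measurable_itv. Qed.

Lemma OmegaE w : Omega mu sigma w = (mu - s3 sigma <= w <= mu + s3 sigma).
Proof. by rewrite /Omega /= in_itv. Qed.

Lemma lebesgue_Omega : lebesgue_measure (Omega mu sigma) = (2 * s3 sigma)%:E.
Proof.
have := s3_gt0; rewrite /Omega lebesgue_measure_itv /= lte_fin => s_gt0.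
by rewrite ifT -?EFinD; [congr EFin | ]; lra.
Qed.

Lemma bounded_integrable_Omega f (B : R) :
  measurable_fun setT f -> (forall w, Omega mu sigma w -> `|f w| <= B) ->
  lebesgue_measure.-integrable (Omega mu sigma) (EFin \o f).
Proof.
move=> mf fB; apply: measurable_bounded_integrable.
- exact: measurable_Omega.
- by change (lebesgue_measure (Omega mu sigma) < +oo)%E; rewrite lebesgue_Omega ltry.
- exact: measurable_funTS.
- exists B; split; first exact: num_real.
  by move=> M /ltW BM w /fB /le_trans; apply.
Qed.

Lemma integrableD_Omega [f g] :
  lebesgue_measure.-integrable (Omega mu sigma) (EFin \o f) ->
  lebesgue_measure.-integrable (Omega mu sigma) (EFin \o g) ->
  lebesgue_measure.-integrable (Omega mu sigma) (EFin \o (fun w => f w + g w)).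
Proof.
move=> fi gi; apply: eq_integrable (integrableD measurable_Omega fi gi).
  exact: measurable_Omega.
by move=> w _ /=; rewrite EFinD.
Qed.

Lemma integrableZ_Omega k [f] :
  lebesgue_measure.-integrable (Omega mu sigma) (EFin \o f) ->
  lebesgue_measure.-integrable (Omega mu sigma) (EFin \o (fun w => k * f w)).
Proof.
move=> fi; apply: eq_integrable (integrableZl measurable_Omega k fi).
  exact: measurable_Omega.
by move=> w _ /=; rewrite EFinM.
Qed.

Lemma ExpD [f g] :
  lebesgue_measure.-integrable (Omega mu sigma) (EFin \o f) ->
  lebesgue_measure.-integrable (Omega mu sigma) (EFin \o g) ->
  Exp mu sigma (fun w => f w + g w) = Exp mu sigma f + Exp mu sigma g.
Proof.
move=> fi gi.
rewrite /Exp RintegralD; [by rewrite mulrDr | exact: measurable_Omega | exact: fi | exact: gi].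
Qed.

Lemma ExpZ k [f] :
  lebesgue_measure.-integrable (Omega mu sigma) (EFin \o f) ->
  Exp mu sigma (fun w => k * f w) = k * Exp mu sigma f.
Proof.
by move=> fi; rewrite /Exp RintegralZl; [rewrite mulrCA | exact: measurable_Omega | exact: fi].
Qed.

Lemma Exp_cst a : Exp mu sigma (fun=> a) = a.
Proof.
have := s3_gt0; rewrite /Exp Rintegral_cst; last exact: measurable_Omega.
by rewrite [X in fine X]lebesgue_Omega /= => s_gt0; field; lra.
Qed.

Lemma eq_Exp_ae [f g] :
  measurable_fun (Omega mu sigma) f -> measurable_fun (Omega mu sigma) g ->
  {ae @lebesgue_measure R, forall w, Omega mu sigma w -> f w = g w} ->
  Exp mu sigma f = Exp mu sigma g.
Proof.
move=> mf mg fg; rewrite /Exp /Rintegral; congr (_ * fine _).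
apply: ae_eq_integral; first exact: measurable_Omega.
- exact/measurable_EFinP.
- exact/measurable_EFinP.
- by apply: ae_lebesgueS fg => w fgw /fgw ->.
Qed.

Lemma eq_Var_ae [f g] :
  measurable_fun (Omega mu sigma) f -> measurable_fun (Omega mu sigma) g ->
  {ae @lebesgue_measure R, forall w, Omega mu sigma w -> f w = g w} ->
  Var mu sigma f = Var mu sigma g.
Proof.
move=> mf mg fg; rewrite /Var (eq_Exp_ae mf mg fg).
have msqr (h : R -> R) : measurable_fun (Omega mu sigma) h ->
    measurable_fun (Omega mu sigma) (fun w => (h w - Exp mu sigma g) ^+ 2).
  by move=> mh; apply/measurable_funX/measurable_funB.
apply: eq_Exp_ae; [exact: msqr | exact: msqr |].
by apply: ae_lebesgueS fg => w fgw /fgw ->.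
Qed.

Lemma Rintegral_Omega_lower_half f :
  lebesgue_measure.-integrable (Omega mu sigma) (EFin \o f) ->
  (forall w, mu < w -> f w = 0) ->
  Rintegral lebesgue_measure (Omega mu sigma) f =
  Rintegral lebesgue_measure `[mu - s3 sigma, mu] f.
Proof.
have := s3_gt0 => s_gt0 fi f0.
have upper0 : Rintegral lebesgue_measure `]mu, mu + s3 sigma] f = 0.
  rewrite (@eq_Rintegral _ _ _ lebesgue_measure _ (fun=> 0) f).
    by rewrite Rintegral_cst ?mul0r; last exact: measurable_itv.
  by move=> w; rewrite inE /= in_itv /= => /andP[/f0 ->].
have := @Rintegral_itvB R f (BLeft (mu - s3 sigma)) (BRight (mu + s3 sigma)) mu fi.
rewrite !bnd_simp upper0 => /(_ ltac:(lra) ltac:(lra)).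
by move/eqP; rewrite subr_eq0 => /eqP.
Qed.

End uniform_expectation.

Definition shortfall {R : realType} (mu w : R) : R := pos (mu - w).
Definition scarcity {R : realType} (mu w : R) : R := if w <= mu then 1 else 0.
Definition affine_profit {R : realType} (mu u v c w : R) : R :=
  u + v * shortfall mu w + c * scarcity mu w.

Section shortfall_scarcity.
Context {R : realType} {mu sigma : R}.
Hypothesis sigma_gt0 : 0 < sigma.

Lemma shortfallE w : shortfall mu w = if w <= mu then mu - w else 0.
Proof. by rewrite /shortfall pos_ifE subr_ge0. Qed.

Lemma measurable_shortfall : measurable_fun setT (shortfall mu).
Proof. by apply: measurable_maxr => //; exact: measurable_funB. Qed.

Lemma measurable_scarcity : measurable_fun setT (scarcity mu).
Proof. by apply: measurable_fun_ifT => //; exact: measurable_fun_ler. Qed.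

Lemma measurable_affine_profit u v c : measurable_fun setT (affine_profit mu u v c).
Proof.
apply: measurable_funD; first apply: measurable_funD.
- exact: measurable_cst.
- by apply: measurable_funM; [exact: measurable_cst | exact: measurable_shortfall].
- by apply: measurable_funM; [exact: measurable_cst | exact: measurable_scarcity].
Qed.

Lemma shortfall_Omega w : Omega mu sigma w -> 0 <= shortfall mu w <= 2 * s3 sigma.
Proof.
have := s3_gt0 sigma_gt0; rewrite OmegaE shortfallE.
by case: ifPn => w_le s_gt0 /andP[? ?]; apply/andP; split; lra.
Qed.

Lemma integrable_cst a : lebesgue_measure.-integrable (Omega mu sigma) (EFin \o fun=> a).
Proof.
apply: (bounded_integrable_Omega sigma_gt0 _ `|a|) => [|w _ //].
exact: measurable_cst.
Qed.

Lemma integrable_shortfall :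
  lebesgue_measure.-integrable (Omega mu sigma) (EFin \o shortfall mu).
Proof.
apply: (bounded_integrable_Omega sigma_gt0 _ (2 * s3 sigma) measurable_shortfall).
by move=> w /shortfall_Omega /andP[sh_ge0 sh_le]; rewrite ger0_norm.
Qed.

Lemma integrable_shortfall_sqr :
  lebesgue_measure.-integrable (Omega mu sigma) (EFin \o fun w => shortfall mu w ^+ 2).
Proof.
apply: (bounded_integrable_Omega sigma_gt0 _ ((2 * s3 sigma) ^+ 2)).
  exact: measurable_funX measurable_shortfall.
move=> w /shortfall_Omega /andP[sh_ge0 sh_le].
by rewrite ger0_norm ?exprn_ge0 // lerXn2r // ?nnegrE // (le_trans sh_ge0).
Qed.

Lemma integrable_scarcity :
  lebesgue_measure.-integrable (Omega mu sigma) (EFin \o scarcity mu).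
Proof.
apply: (bounded_integrable_Omega sigma_gt0 _ 1 measurable_scarcity) => w _.
by rewrite /scarcity; case: ifPn; rewrite ?normr1 ?normr0.
Qed.

Lemma Exp_scarcity : Exp mu sigma (scarcity mu) = 2^-1.
Proof.
have := s3_gt0 sigma_gt0 => s_gt0.
rewrite /Exp Rintegral_Omega_lower_half //; last 2 first.
- exact: integrable_scarcity.
- by move=> w; rewrite /scarcity ltNge => /negbTE ->.
rewrite (@eq_Rintegral _ _ _ lebesgue_measure _ (fun=> 1) (scarcity mu)); last first.
  by move=> w; rewrite inE /= in_itv /= => /andP[_ w_le]; rewrite /scarcity w_le.
rewrite Rintegral_cst; last exact: measurable_itv.
rewrite [X in fine X]lebesgue_measure_itv /= lte_fin ifT; last lra.
by rewrite /=; field; lra.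
Qed.

Lemma Exp_shortfall : Exp mu sigma (shortfall mu) = s3 sigma / 4.
Proof.
have := s3_gt0 sigma_gt0 => s_gt0.
rewrite /Exp Rintegral_Omega_lower_half //; last 2 first.
- exact: integrable_shortfall.
- by move=> w; rewrite shortfallE ltNge => /negbTE ->.
rewrite (@eq_Rintegral _ _ _ lebesgue_measure _ (fun w => mu - w) (shortfall mu)).
  by rewrite Rintegral_itv_subr; [field; lra | lra].
by move=> w; rewrite inE /= in_itv /= => /andP[_ w_le]; rewrite shortfallE w_le.
Qed.

(* There is no cross term: [scarcity mu] is 1 wherever [shortfall mu] is nonzero. *)
Lemma affine_profit_sqr u v c w : affine_profit mu u v c w ^+ 2 =
  u ^+ 2 + 2 * v * (u + c) * shortfall mu w + v ^+ 2 * shortfall mu w ^+ 2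
  + c * (2 * u + c) * scarcity mu w.
Proof. by rewrite /affine_profit shortfallE /scarcity; case: ifP => _; ring. Qed.

Lemma Exp_quadratic a b c d :
  Exp mu sigma (fun w => a + b * shortfall mu w + c * shortfall mu w ^+ 2
                         + d * scarcity mu w) =
  a + b * (s3 sigma / 4) + c * Exp mu sigma (fun w => shortfall mu w ^+ 2) + d / 2.
Proof.
have i1 := integrable_cst a.
have iY := integrableZ_Omega b integrable_shortfall.
have iY2 := integrableZ_Omega c integrable_shortfall_sqr.
have iX := integrableZ_Omega d integrable_scarcity.
rewrite ExpD; [|exact: integrableD_Omega (integrableD_Omega i1 iY) iY2 | exact: iX].
rewrite ExpD; [|exact: integrableD_Omega i1 iY | exact: iY2].
rewrite ExpD; [|exact: i1 | exact: iY].
rewrite Exp_cst // !ExpZ ?Exp_shortfall ?Exp_scarcity //.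
- exact: integrable_scarcity.
- exact: integrable_shortfall_sqr.
- exact: integrable_shortfall.
Qed.

Lemma Exp_affine_profit u v c :
  Exp mu sigma (affine_profit mu u v c) = u + v * (s3 sigma / 4) + c / 2.
Proof.
have -> : affine_profit mu u v c =
    (fun w => u + v * shortfall mu w + 0 * shortfall mu w ^+ 2 + c * scarcity mu w).
  by apply/funext => w; rewrite mul0r addr0.
by rewrite Exp_quadratic mul0r addr0.
Qed.

Lemma Var_affine_profit u v c : Var mu sigma (affine_profit mu u v c) =
  v ^+ 2 * Var mu sigma (shortfall mu) + v * c * (s3 sigma / 4) + c ^+ 2 / 4.
Proof.
suff VarE u' v' c' : Var mu sigma (affine_profit mu u' v' c') =
    v' ^+ 2 * (Exp mu sigma (fun w => shortfall mu w ^+ 2) - (s3 sigma / 4) ^+ 2)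
    + v' * c' * (s3 sigma / 4) + c' ^+ 2 / 4.
  have -> : shortfall mu = affine_profit mu 0 1 0.
    by apply/funext => w; rewrite /affine_profit; ring.
  by rewrite !VarE; ring.
rewrite /Var Exp_affine_profit; set M := u' + _ + _.
have -> : (fun w => (affine_profit mu u' v' c' w - M) ^+ 2) =
    (fun w => (u' - M) ^+ 2 + 2 * v' * (u' - M + c') * shortfall mu w
      + v' ^+ 2 * shortfall mu w ^+ 2 + c' * (2 * (u' - M) + c') * scarcity mu w).
  by apply/funext => w; rewrite -affine_profit_sqr /affine_profit; ring.
by rewrite Exp_quadratic /M; field.
Qed.

End shortfall_scarcity.

Definition option_payout {R : realType} (rho : R) (x : R * R * R) : R :=
  (rho^-1 - Kof x) * Dof x.
Definition variance_change {R : realType} (sigma rho c : R) : R :=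
  c ^+ 2 / 2 - (2 * rho^-1 - 1) * c * (s3 sigma / 4).
Definition optimal_payout {R : realType} (sigma rho : R) : R :=
  (2 * rho^-1 - 1) * (s3 sigma / 4).

Section market.
Context {R : realType} {mu sigma rho : R}.
Hypothesis sigma_gt0 : 0 < sigma.
Implicit Types (x xW xP : R * R * R) (delta : R -> R).

Lemma pos_price_sub K w :
  0 <= K <= rho^-1 -> pos (price mu rho w - K) = (rho^-1 - K) * scarcity mu w.
Proof.
move=> /andP[K_ge0 K_le]; rewrite /price /scarcity; case: ifP => _; rewrite pos_ifE.
  by rewrite subr_ge0 K_le mulr1.
by rewrite sub0r oppr_ge0 mulr0; case: ifP => K_le0; lra.
Qed.

Lemma measurable_price : measurable_fun setT (price mu rho).
Proof. by apply: measurable_fun_ifT => //; exact: measurable_fun_ler. Qed.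

Lemma profitW_affine : profitW mu rho = affine_profit mu mu (- rho^-1) 0.
Proof. by apply/funext => w; rewrite /profitW /affine_profit /shortfall; ring. Qed.

Lemma profitP_affine : profitP mu rho = affine_profit mu 0 (rho^-1 - 1) 0.
Proof. by apply/funext => w; rewrite /profitP /affine_profit /shortfall; ring. Qed.

Lemma PiW_affine x : 0 <= Kof x <= rho^-1 ->
  PiW mu rho x = affine_profit mu (mu - qof x * Dof x) (- rho^-1) (option_payout rho x).
Proof.
move=> K_range; apply/funext => w.
by rewrite /PiW pos_price_sub // /profitW /affine_profit /option_payout /shortfall; ring.
Qed.

Lemma measurable_PiP x [delta] : measurable_fun (Omega mu sigma) delta ->
  measurable_fun (Omega mu sigma) (PiP mu rho x delta).
Proof.
move=> mdelta; apply: measurable_funB; last apply: measurable_funM => //.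
- rewrite profitP_affine; apply/measurable_funTS/measurable_funD => //.
  exact: measurable_affine_profit.
- apply/measurable_funTS/measurable_maxr => //.
  exact: measurable_funB measurable_price _.
Qed.

Lemma PiP_affine_ae [xW xP delta] : Feasible mu sigma rho xW xP delta ->
  {ae @lebesgue_measure R, forall w, Omega mu sigma w -> PiP mu rho xP delta w =
     affine_profit mu (qof xW * Dof xW) (rho^-1 - 1) (- option_payout rho xW) w}.
Proof.
move=> [[[[_ KW_range _] _] _ _ _ _] [_ zero_surplus]].
apply: ae_lebesgueS zero_surplus => w surplus0 /surplus0.
by rewrite pos_price_sub // /PiP /profitP /affine_profit /option_payout /shortfall; lra.
Qed.

Lemma variance_change_Feasible [xW xP delta] : Feasible mu sigma rho xW xP delta ->
  (Var mu sigma (PiW mu rho xW) - Var mu sigma (profitW mu rho))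
  + (Var mu sigma (PiP mu rho xP delta) - Var mu sigma (profitP mu rho))
  = variance_change sigma rho (option_payout rho xW).
Proof.
move=> F; have [[[[_ KW_range _] _] _ mdelta _ _] _] := F.
rewrite PiW_affine // profitW_affine profitP_affine.
rewrite (eq_Var_ae (measurable_PiP xP mdelta) _ (PiP_affine_ae F)); last first.
  by apply: measurable_funTS; exact: measurable_affine_profit.
by rewrite !Var_affine_profit // /variance_change; move: (rho^-1) => r; field.
Qed.

Lemma Objective_Feasible [xW xP delta] : Feasible mu sigma rho xW xP delta ->
  Objective mu sigma rho xW xP delta = Var mu sigma (profitW mu rho)
    + Var mu sigma (profitP mu rho) + variance_change sigma rho (option_payout rho xW).
Proof.
move=> /variance_change_Feasible <-; rewrite /Objective.
(* Generalized so that [ring] does not try to unfold the variances. *)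
move: (Var _ _ (PiW _ _ _)) (Var _ _ (PiP _ _ _ _)) (Var _ _ (profitW _ _)) => a b c.
by move: (Var _ _ (profitP _ _)) => d; ring.
Qed.

Lemma variance_changeE c : variance_change sigma rho c =
  variance_change sigma rho (optimal_payout sigma rho)
  + (c - optimal_payout sigma rho) ^+ 2 / 2.
Proof. by rewrite /variance_change /optimal_payout; move: (rho^-1) => r; field. Qed.

Lemma variance_change_optimalE : variance_change sigma rho (optimal_payout sigma rho) =
  - optimal_payout sigma rho ^+ 2 / 2.
Proof. by rewrite /variance_change /optimal_payout; move: (rho^-1) => r; field. Qed.

Lemma variance_change_optimal : variance_change sigma rho (optimal_payout sigma rho) =
  - (3 * sigma ^+ 2 / 8) * (rho^-1 - 2^-1) ^+ 2.
Proof.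
have sqrt3E : Num.sqrt 3 ^+ 2 = 3 :> R by rewrite sqr_sqrtr // ler0n.
rewrite variance_change_optimalE /optimal_payout /s3.
by move: (Num.sqrt 3) sqrt3E (rho^-1) => t <- r; field.
Qed.

End market.

Definition Delta_min {R : realType} (sigma rho : R) : R := s3 sigma * (2 - rho) / 4.

Section optimal_contracts.
Context {R : realType} {mu sigma rho : R}.
Hypotheses (sigma_gt0 : 0 < sigma) (rho_gt0 : 0 < rho) (rho_lt1 : rho < 1).
Implicit Types (x xW xP : R * R * R) (delta : R -> R).

Lemma optimal_payout_gt0 : 0 < optimal_payout sigma rho.
Proof.
have s_gt0 := s3_gt0 sigma_gt0; have rho_inv_gt1 : 1 < rho^-1 by rewrite invf_gt1.
by rewrite mulr_gt0 ?divr_gt0 //; lra.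
Qed.

Lemma rho_optimal_payout : rho * optimal_payout sigma rho = Delta_min sigma rho.
Proof. by rewrite /optimal_payout /Delta_min; field; rewrite gt_eqF. Qed.

Lemma Delta_min_gt0 : 0 < Delta_min sigma rho.
Proof. by rewrite -rho_optimal_payout mulr_gt0 // optimal_payout_gt0. Qed.

Lemma qstarE D : D != 0 -> qstar sigma rho D = optimal_payout sigma rho / (2 * D).
Proof. by move=> D_neq0; rewrite /qstar /optimal_payout; field; rewrite D_neq0 gt_eqF. Qed.

Lemma KstarE D : D != 0 -> Kstar sigma rho D = rho^-1 - optimal_payout sigma rho / D.
Proof. by move=> D_neq0; rewrite /Kstar /optimal_payout; field; rewrite D_neq0 gt_eqF. Qed.

Lemma option_payout_xstar D :
  D != 0 -> option_payout rho (xstar sigma rho D) = optimal_payout sigma rho.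
Proof.
move=> D_neq0; rewrite /option_payout /Kof /Dof /= KstarE //.
by field; rewrite D_neq0 gt_eqF.
Qed.

Lemma AW_AP_xstar [D] : Delta_min sigma rho <= D <= s3 sigma ->
  AW sigma rho (xstar sigma rho D) /\ AP sigma rho (xstar sigma rho D).
Proof.
move=> /andP[D_ge D_le]; have k_gt0 := optimal_payout_gt0.
have D_gt0 : 0 < D := lt_le_trans Delta_min_gt0 D_ge.
have kD_le : optimal_payout sigma rho / D <= rho^-1.
  rewrite ler_pdivrMr // -(ler_pM2l rho_gt0) mulVKf ?gt_eqF //.
  by rewrite rho_optimal_payout.
have kD_ge0 : 0 <= optimal_payout sigma rho / D by rewrite divr_ge0 ?ltW.
have kD2E : optimal_payout sigma rho / (2 * D) = optimal_payout sigma rho / D / 2.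
  by field; rewrite gt_eqF.
have sum : Kstar sigma rho D + 2 * qstar sigma rho D = rho^-1.
  by rewrite KstarE ?qstarE ?gt_eqF // kD2E; lra.
have A0x : A0 sigma rho (xstar sigma rho D).
  rewrite /A0 /qof /Kof /Dof /= KstarE ?qstarE ?gt_eqF // kD2E.
  by split; apply/andP; split; lra.
by split; split; rewrite // sum.
Qed.

Lemma Feasible_xstar [D delta] : Delta_min sigma rho <= D <= s3 sigma ->
  measurable_fun (Omega mu sigma) delta ->
  (forall w, Omega mu sigma w -> 0 <= delta w <= D) ->
  {ae @lebesgue_measure R, forall w, Omega mu sigma w ->
     delta w = (if Kstar sigma rho D <= price mu rho w then D else 0)} ->
  Feasible mu sigma rho (xstar sigma rho D) (xstar sigma rho D) delta.
Proof.
move=> D_range mdelta delta_bd settle; have [AWx APx] := AW_AP_xstar D_range.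
split; first by split.
split; first exact: settle.
apply: ae_lebesgueS settle => w settle_w /settle_w ->; rewrite /qof /Kof /Dof /=.
case: ifPn => [_|K_gt]; first ring.
by rewrite pos_ifE subr_ge0 (negbTE K_gt); ring.
Qed.

Lemma exists_Feasible_optimal_payout : exists xW xP delta,
  Feasible mu sigma rho xW xP delta /\ option_payout rho xW = optimal_payout sigma rho.
Proof.
have s_gt0 := s3_gt0 sigma_gt0; have rho_inv_gt1 : 1 < rho^-1 by rewrite invf_gt1.
have D_range : Delta_min sigma rho <= s3 sigma <= s3 sigma.
  have le4 : 2 - rho <= 4 by move: rho_gt0; lra.
  by rewrite lexx andbT /Delta_min ler_pdivrMr // ler_pM2l.
have K_range : 0 < Kstar sigma rho (s3 sigma) <= rho^-1.
  have -> : Kstar sigma rho (s3 sigma) = (2 * rho^-1 + 1) / 4.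
    by rewrite /Kstar; field; rewrite !gt_eqF.
  by apply/andP; split; lra.
have /andP[K_gt0 K_le] := K_range.
exists (xstar sigma rho (s3 sigma)), (xstar sigma rho (s3 sigma)).
exists (fun w => s3 sigma * scarcity mu w); split; last first.
  by rewrite option_payout_xstar ?gt_eqF.
apply: Feasible_xstar => //.
- by apply/measurable_funTS/measurable_funM => //; exact: measurable_scarcity.
- move=> w _; rewrite /scarcity.
  by case: ifP => _; rewrite ?mulr1 ?mulr0 lexx (ltW s_gt0).
- apply: aeW => w _; rewrite /scarcity /price.
  by case: ifP => _; rewrite ?K_le ?mulr1 // mulr0 leNgt K_gt0.
Qed.

Lemma Optimal_payoutP [xW xP delta] : Feasible mu sigma rho xW xP delta ->
  Optimal mu sigma rho xW xP delta <-> option_payout rho xW = optimal_payout sigma rho.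
Proof.
move=> F; rewrite /Optimal; split => [[_ minimal] | payout].
  have [xW0 [xP0 [delta0 [F0 payout0]]]] := exists_Feasible_optimal_payout.
  have := minimal _ _ _ F0; rewrite !Objective_Feasible // payout0 lerD2l.
  rewrite variance_changeE gerDl pmulr_lle0 ?invr_gt0 // => sqr_le0.
  by apply/eqP; rewrite -subr_eq0 -sqrf_eq0 eq_le sqr_ge0 sqr_le0.
split => // xW' xP' delta' F'; rewrite !Objective_Feasible // payout lerD2l.
by rewrite [leRHS]variance_changeE lerDl divr_ge0 ?sqr_ge0.
Qed.

Lemma Feasible_same_contract [xW xP delta] :
  Feasible mu sigma rho xW xP delta -> Dof xW != 0 -> xP = xW.
Proof.
move: xW xP => [[qW KW] DW] [[qP KP] DP]; rewrite /Feasible /AW /AP /A0 /qof /Kof /Dof /=.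
move=> [[[[_ KW_range _] _] [[_ KP_range _] _] _ _ ->] [settle surplus]] DW_neq0.
have s_gt0 := s3_gt0 sigma_gt0.
have witness (a b : R) : mu - s3 sigma <= a < b -> b <= mu + s3 sigma ->
    exists2 w, a <= w <= b & delta w = (if KW <= price mu rho w then DW else 0) /\
      qW * DW - qP * DW - pos (price mu rho w - KW) * DW
      + pos (price mu rho w - KP) * delta w = 0.
  move=> /andP[a_ge ab] b_le.
  have [w w_ab [/(_ _) settle_w /(_ _) surplus_w]] := ae_witness (measurable_itv `[a, b])
    (lebesgue_itv_gt0 true false ab) (ae_lebesgueI settle surplus).
  have Ow : Omega mu sigma w.
    by move: w_ab; rewrite OmegaE /= in_itv /= => /andP[? ?]; apply/andP; split; lra.
  by exists w; [move: w_ab; rewrite /= in_itv | split; [exact: settle_w | exact: surplus_w]].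
have [w1 /andP[_ w1_le] [settle1 surplus1]] :=
  witness (mu - s3 sigma) mu ltac:(lra) ltac:(lra).
have [w2 /andP[w2_ge _] [_ surplus2]] :=
  witness (mu + s3 sigma / 2) (mu + s3 sigma) ltac:(lra) ltac:(lra).
have /andP[_ KW_le] := KW_range.
rewrite !pos_price_sub // in surplus1 surplus2.
rewrite /price /scarcity w1_le KW_le mulr1 in settle1 surplus1.
have mu_lt_w2 : mu < w2 by lra.
rewrite /scarcity leNgt mu_lt_w2 /= !mulr0 in surplus2.
have qPW : qP = qW by apply: (mulIf DW_neq0); lra.
have KPW : KP = KW by apply: (mulIf DW_neq0); move: surplus1; rewrite settle1 qPW; lra.
by rewrite qPW KPW.
Qed.

Lemma optimal_payout_contract [x] :
  AW sigma rho x -> AP sigma rho x -> option_payout rho x = optimal_payout sigma rho ->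
  Delta_min sigma rho <= Dof x <= s3 sigma /\ x = xstar sigma rho (Dof x).
Proof.
move: x => [[q K] D]; rewrite /AW /AP /A0 /option_payout /qof /Kof /Dof /=.
move=> [[_ /andP[K_ge0 _] /andP[D_ge0 D_le]] sumW] [_ sumP] payout.
have D_neq0 : D != 0.
  by apply: contraTneq optimal_payout_gt0 => D0; rewrite -payout D0 mulr0 ltxx.
split.
  rewrite D_le andbT -rho_optimal_payout -payout mulrA -[leRHS]mul1r ler_wpM2r //.
  by rewrite mulrBr mulfV ?gt_eqF // gerBl mulr_ge0 // ltW.
have qE : q = (rho^-1 - K) / 2 by lra.
rewrite /xstar qstarE // KstarE // -payout qE.
by congr (_, _, _); field; rewrite ?D_neq0 ?gt_eqF.
Qed.

Lemma Feasible_optimal_payout [xW xP delta] :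
  Feasible mu sigma rho xW xP delta -> option_payout rho xW = optimal_payout sigma rho ->
  exists D : R,
    [/\ Delta_min sigma rho <= D <= s3 sigma,
        xW = xstar sigma rho D /\ xP = xstar sigma rho D,
        measurable_fun (Omega mu sigma) delta,
        (forall w, Omega mu sigma w -> 0 <= delta w <= D) &
        {ae @lebesgue_measure R, forall w, Omega mu sigma w ->
           delta w = (if Kstar sigma rho D <= price mu rho w then D else 0)}].
Proof.
move=> F payout; have D_neq0 : Dof xW != 0.
  by apply: contraTneq optimal_payout_gt0 => D0; rewrite -payout /option_payout D0 mulr0 ltxx.
have xPW := Feasible_same_contract F D_neq0.
have [[AWx APx mdelta delta_bd _] [settle _]] := F.
rewrite xPW in APx delta_bd.
have [D_range xWE] := optimal_payout_contract AWx APx payout.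
have KE : Kstar sigma rho (Dof xW) = Kof xW by rewrite [in RHS]xWE.
by exists (Dof xW); split; rewrite ?KE // xPW -xWE.
Qed.

Lemma OptimalP xW xP delta : Optimal mu sigma rho xW xP delta <->
  exists D : R,
    [/\ Delta_min sigma rho <= D <= s3 sigma,
        xW = xstar sigma rho D /\ xP = xstar sigma rho D,
        measurable_fun (Omega mu sigma) delta,
        (forall w, Omega mu sigma w -> 0 <= delta w <= D) &
        {ae @lebesgue_measure R, forall w, Omega mu sigma w ->
           delta w = (if Kstar sigma rho D <= price mu rho w then D else 0)}].
Proof.
split => [opt | [D [D_range [-> ->] mdelta delta_bd settle]]].
  exact: Feasible_optimal_payout opt.1 ((Optimal_payoutP opt.1).1 opt).
have F := Feasible_xstar D_range mdelta delta_bd settle.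
have D_gt0 : 0 < D := lt_le_trans Delta_min_gt0 (andP D_range).1.
by apply/(Optimal_payoutP F)/option_payout_xstar; rewrite gt_eqF.
Qed.

Lemma Optimal_variance_change xW xP delta : Optimal mu sigma rho xW xP delta ->
  (Var mu sigma (PiW mu rho xW) - Var mu sigma (profitW mu rho))
  + (Var mu sigma (PiP mu rho xP delta) - Var mu sigma (profitP mu rho))
  = variance_change sigma rho (optimal_payout sigma rho).
Proof.
move=> opt; rewrite (variance_change_Feasible sigma_gt0 opt.1).
by rewrite ((Optimal_payoutP opt.1).1 opt).
Qed.

Lemma variance_change_optimal_lt0 : variance_change sigma rho (optimal_payout sigma rho) < 0.
Proof.
rewrite variance_change_optimalE mulNr oppr_lt0 divr_gt0 //.
by rewrite exprn_gt0 // optimal_payout_gt0.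
Qed.

End optimal_contracts.

Theorem proposition5 (R : realType) (mu sigma rho : R) :
  0 < mu -> 0 < sigma -> Num.sqrt 3 * sigma <= mu -> 0 < rho < 1 ->
  (forall (xW xP : R * R * R) (delta : R -> R),
     Optimal mu sigma rho xW xP delta <->
     exists D : R,
       [/\ Num.sqrt 3 * sigma * (2 - rho) / 4 <= D <= Num.sqrt 3 * sigma,
           xW = xstar sigma rho D /\ xP = xstar sigma rho D,
           measurable_fun (Omega mu sigma) delta,
           (forall w, Omega mu sigma w -> 0 <= delta w <= D) &
           {ae @lebesgue_measure R, forall w, Omega mu sigma w ->
              delta w = (if Kstar sigma rho D <= price mu rho w then D else 0)}]) /\
  (forall (xW xP : R * R * R) (delta : R -> R),
     Optimal mu sigma rho xW xP delta ->
     (Var mu sigma (PiW mu rho xW) - Var mu sigma (profitW mu rho))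
     + (Var mu sigma (PiP mu rho xP delta) - Var mu sigma (profitP mu rho))
     = - (3 * sigma ^+ 2 / 8) * (rho^-1 - 2^-1) ^+ 2) /\
  - (3 * sigma ^+ 2 / 8) * (rho^-1 - 2^-1) ^+ 2 < 0.
Proof.
move=> _ sigma_gt0 _ /andP[rho_gt0 rho_lt1]; rewrite -variance_change_optimal.
split; [|split].
- exact: OptimalP.
- exact: Optimal_variance_change.
- exact: variance_change_optimal_lt0.
Qed.
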